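(* In the semi-classical setting, with $\Theta_n,\Omega_n$ as in the context, for every $n\ge 1$: $$\Omega_{n+1}(z) = (z-b_n)\Theta_n(z) - \Omega_n(z),$$ $$(z-b_n)\big(\Omega_{n+1}(z)-\Omega_n(z)\big) = W(z) + a_{n+1}^2\Theta_{n+1}(z) - a_n^2\Theta_{n-1}(z),$$ $$\Omega_n(z)^2 - a_n^2\Theta_n(z)\Theta_{n-1}(z) = V(z)^2 + W(z)\sum_{i=0}^{n-1}\Theta_i(z).$$
   Context: Let $(\mu_k)_{k\ge 0}$ be complex numbers such that all Hankel determinants $\det(\mu_{i+j})_{0\le i,j\le n}$ are nonzero; $\mathcal L(x^k)=\mu_k$; $p_n(z)=\gamma_n z^n+\cdots$ ($\gamma_n\ne0$) orthonormal: $\mathcal L(p_np_m)=\delta_{n,m}$; recurrence $a_{n+1}p_{n+1}(z)=(z-b_n)p_n(z)-a_np_{n-1}(z)$, $p_{-1}=0$, $a_n=\gamma_{n-1}/\gamma_n$. $f(z)=\sum_{k\ge0}\mu_k z^{-k-1}$ (formal series); $p^{(1)}_{n-1}$ is the polynomial part of $fp_n$ and $\varepsilon_n=fp_n-p^{(1)}_{n-1}$. Semi-classical: polynomials $W\not\equiv0,V,U$ with $Wf'=2Vf+U$. For $n\ge0$, $\Theta_n = W(\varepsilon_n p_n' - \varepsilon_n' p_n) + 2V\varepsilon_n p_n$, and for $n\ge1$, $\Omega_n = a_n W(\varepsilon_{n-1}p_n' - \varepsilon_n' p_{n-1}) + a_n V(\varepsilon_{n-1}p_n + \varepsilon_n p_{n-1})$;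 these are polynomials in $z$. *)

(* Formal Laurent series in z (finitely many positive powers)
   are represented by their coefficient functions int -> C : s k = coeff of z^k. *)
From HB Require Import structures.
From mathcomp Require Import all_boot all_order all_algebra.
Set Implicit Arguments. Unset Strict Implicit. Unset Printing Implicit Defensive.
Import Order.TTheory GRing.Theory Num.Theory.
Local Open Scope ring_scope.

Definition ser (C : Type) := int -> C.

Section Defs.
Variable C : numClosedFieldType.

Definition pser (P : {poly C}) : ser C :=
  fun k => match k with Posz n => P`_n | Negz _ => 0 end.

(* f(z) = sum_k mu_k z^{-k-1};  Negz m = -(m+1) *)
Definition fser (mu : nat -> C) : ser C :=
  fun k => match k with Posz _ => 0 | Negz m => mu m end.

Definition pmul (P : {poly C}) (s : ser C) : ser C :=
  fun k => \sum_(i < size P) P`_i * s (k - (i%:Z))%R.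

Definition sderiv (s : ser C) : ser C := fun k => (k + 1)%:~R * s (k + 1)%R.

Definition sadd (s t : ser C) : ser C := fun k => s k + t k.
Definition ssub (s t : ser C) : ser C := fun k => s k - t k.
Definition sscale (c : C) (s : ser C) : ser C := fun k => c * s k.

Definition Lfun (mu : nat -> C) (P : {poly C}) : C :=
  \sum_(i < size P) P`_i * mu i.

Definition ptrunc (N : nat) (s : ser C) : {poly C} := \poly_(i < N) s (Posz i).

(* p^{(1)}: polynomial part of f P (all coefficients of f P at z^k, k >= size P,
   vanish, so truncation at size P is exactly the polynomial part) *)
Definition p1 (mu : nat -> C) (P : {poly C}) : {poly C} :=
  ptrunc (size P) (pmul P (fser mu)).

Definition eps (mu : nat -> C) (P : {poly C}) : ser C :=
  ssub (pmul P (fser mu)) (pser (p1 mu P)).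

Definition Theta_ser (mu : nat -> C) (W V : {poly C}) (p : nat -> {poly C})
    (n : nat) : ser C :=
  sadd (pmul W (ssub (pmul (p n)^`() (eps mu (p n)))
                     (pmul (p n) (sderiv (eps mu (p n))))))
       (pmul (2%:R *: V) (pmul (p n) (eps mu (p n)))).

Definition Omega_ser (mu : nat -> C) (W V : {poly C}) (a : nat -> C)
    (p : nat -> {poly C}) (n : nat) : ser C :=
  sscale (a n)
   (sadd (pmul W (ssub (pmul (p n)^`() (eps mu (p n.-1)))
                       (pmul (p n.-1) (sderiv (eps mu (p n))))))
         (pmul V (sadd (pmul (p n) (eps mu (p n.-1)))
                       (pmul (p n.-1) (eps mu (p n)))))).

(* Theta_n and Omega_n as polynomials: their coefficients of z^k for
   k >= the bound below vanish for degree reasons, and the coefficients of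
   negative powers vanish by the (known) fact that they are polynomials. *)
Definition ThetaP (mu : nat -> C) (W V : {poly C}) (p : nat -> {poly C}) (n : nat) : {poly C} :=
  ptrunc (size W + size V + size (p n) + size (p n.-1) + 2) (Theta_ser mu W V p n).

Definition OmegaP (mu : nat -> C) (W V : {poly C}) (a : nat -> C) (p : nat -> {poly C}) (n : nat) : {poly C} :=
  ptrunc (size W + size V + size (p n) + size (p n.-1) + 2) (Omega_ser mu W V a p n).

End Defs.

From HB Require Import structures.
From mathcomp Require Import all_boot all_order all_algebra.
From mathcomp Require Import ring zify.
From Stdlib Require Import FunctionalExtensionality.
Import Order.TTheory GRing.Theory Num.Theory.
Local Open Scope ring_scope.
Set Implicit Arguments. Unset Strict Implicit.

(* Eliminating f' through W f' = 2 V f + U turns Θ_n and Ω_n into polynomial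
   expressions in p_n, q_n := p^(1)_(n-1) and their derivatives; the truncations
   defining them lose nothing because ε_n = O(z^(-n-1)), which is orthogonality.
   Both (p_n) and (q_n) satisfy the three-term recurrence, with Wronskian
   a_(n+1) (q_(n+1) p_n - q_n p_(n+1)) = 1, and modulo these relations the first
   two identities are polynomial identities.  The third follows from the first two
   by induction on n. *)

Section ThreeTermIdentities.
Variables (R : comNzRingType) (U V W : {poly R}).

(* For P = p_n and Q = q_n, eliminating f' turns Θ_n into [theta P Q];
   likewise Ω_n = a_n * [omega p_(n-1) q_(n-1) p_n q_n]. *)
Definition theta (P Q : {poly R}) : {poly R} :=
  - (U * P ^+ 2) + W * (Q^`() * P - Q * P^`()) - V *+ 2 * (Q * P).

Definition omega (P0 Q0 P1 Q1 : {poly R}) : {poly R} :=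
  - (U * P1 * P0) + W * (Q1^`() * P0 - Q0 * P1^`()) - V * (Q0 * P1 + Q1 * P0).

Variables (A B c : R).

Lemma deriv_three_term {X0 X1 X2 : {poly R}} :
  B%:P * X2 = ('X - c%:P) * X1 - A%:P * X0 ->
  B%:P * X2^`() = X1 + ('X - c%:P) * X1^`() - A%:P * X0^`().
Proof. by move=> h; rewrite -deriv_mulC h !derivE; ring. Qed.

Variables (P0 P1 P2 Q0 Q1 Q2 : {poly R}).
Hypothesis recP : B%:P * P2 = ('X - c%:P) * P1 - A%:P * P0.
Hypothesis recQ : B%:P * Q2 = ('X - c%:P) * Q1 - A%:P * Q0.
Hypothesis wronskian : A%:P * (Q1 * P0 - Q0 * P1) = 1.

Lemma wronskian_deriv :
  A%:P * (Q1^`() * P0 + Q1 * P0^`() - (Q0^`() * P1 + Q0 * P1^`())) = 0.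
Proof.
transitivity (A%:P * (Q1 * P0 - Q0 * P1))^`(); first by rewrite !derivE; ring.
by rewrite wronskian -polyC1 derivC.
Qed.

Lemma omega_rec :
  B%:P * omega P1 Q1 P2 Q2 = ('X - c%:P) * theta P1 Q1 - A%:P * omega P0 Q0 P1 Q1.
Proof.
have dP := deriv_three_term recP; have dQ := deriv_three_term recQ.
apply/eqP; rewrite -subr_eq0; apply/eqP.
transitivity (- (U * P1) * (B%:P * P2 - (('X - c%:P) * P1 - A%:P * P0))
  + W * (P1 * (B%:P * Q2^`() - (Q1 + ('X - c%:P) * Q1^`() - A%:P * Q0^`()))
         - Q1 * (B%:P * P2^`() - (P1 + ('X - c%:P) * P1^`() - A%:P * P0^`())))
  - V * (Q1 * (B%:P * P2 - (('X - c%:P) * P1 - A%:P * P0))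
         + P1 * (B%:P * Q2 - (('X - c%:P) * Q1 - A%:P * Q0)))
  + W * (A%:P * (Q1^`() * P0 + Q1 * P0^`() - (Q0^`() * P1 + Q0 * P1^`())))).
  by rewrite /omega /theta; ring.
by rewrite recP recQ dP dQ wronskian_deriv !subrr; ring.
Qed.

Lemma omega_diff :
  ('X - c%:P) * (B%:P * omega P1 Q1 P2 Q2 - A%:P * omega P0 Q0 P1 Q1)
  = W + B%:P ^+ 2 * theta P2 Q2 - A%:P ^+ 2 * theta P0 Q0.
Proof.
have dP := deriv_three_term recP; have dQ := deriv_three_term recQ.
have -> : B%:P ^+ 2 * theta P2 Q2
  = - (U * (B%:P * P2) ^+ 2)
    + W * ((B%:P * Q2^`()) * (B%:P * P2) - (B%:P * Q2) * (B%:P * P2^`()))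
    - V *+ 2 * ((B%:P * Q2) * (B%:P * P2)) by rewrite /theta; ring.
rewrite omega_rec recP recQ dP dQ; apply/eqP; rewrite -subr_eq0; apply/eqP.
transitivity (W * (A%:P * (Q1 * P0 - Q0 * P1) - 1)
  - ('X - c%:P) * W * (A%:P * (Q1^`() * P0 + Q1 * P0^`() - (Q0^`() * P1 + Q0 * P1^`())))).
  by rewrite /omega /theta; ring.
by rewrite wronskian wronskian_deriv subrr; ring.
Qed.

End ThreeTermIdentities.

Lemma omega_sq_step (R : comPzRingType) (O1 O2 T0 T1 T2 L W V S A B : R) :
  O2 = L * T1 - O1 -> L * (O2 - O1) = W + B ^+ 2 * T2 - A ^+ 2 * T0 ->
  O1 ^+ 2 - A ^+ 2 * (T1 * T0) = V ^+ 2 + W * S ->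
  O2 ^+ 2 - B ^+ 2 * (T2 * T1) = V ^+ 2 + W * (S + T1).
Proof.
move=> eO2 eL eS; have eW : W = L * (O2 - O1) - B ^+ 2 * T2 + A ^+ 2 * T0.
  by rewrite eL; ring.
by rewrite mulrDr addrA -eS eW eO2; ring.
Qed.

Lemma sum_coef_widen (R : nzSemiRingType) (P : {poly R}) (N : nat) (F : nat -> R) :
  (size P <= N)%N -> \sum_(i < size P) P`_i * F i = \sum_(i < N) P`_i * F i.
Proof.
move=> hN; rewrite (big_ord_widen N (fun i => P`_i * F i)) // big_mkcond /=.
apply: eq_bigr => i _; case: ltnP => // hi.
by rewrite nth_default // mul0r.
Qed.

Section SeriesAlgebra.
Variable C : numClosedFieldType.
Implicit Types (P Q A B Z : {poly C}) (s t : ser C).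

Definition szero : ser C := fun _ => 0.
Definition smulz s : ser C := fun k => s (k - 1).

Lemma pmul_widen P s k N : (size P <= N)%N ->
  pmul P s k = \sum_(i < N) P`_i * s (k - i%:Z).
Proof. exact: (sum_coef_widen (fun i => s (k - i%:Z))). Qed.

Lemma pmul0l s : pmul 0 s = szero.
Proof. by apply: functional_extensionality => k; rewrite /pmul size_poly0 big_ord0. Qed.

Lemma pmulDl P Q s : pmul (P + Q) s = sadd (pmul P s) (pmul Q s).
Proof.
apply: functional_extensionality => k; rewrite /sadd.
rewrite (pmul_widen _ _ (leq_maxl (size P) (size Q))).
rewrite (pmul_widen _ _ (leq_maxr (size P) (size Q))).
rewrite (pmul_widen _ _ (size_polyD P Q)) -big_split.
by apply: eq_bigr => i _; rewrite coefD mulrDl.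
Qed.

Lemma pmulCMl (c : C) P s : pmul (c%:P * P) s = sscale c (pmul P s).
Proof.
apply: functional_extensionality => k; rewrite /sscale.
rewrite (pmul_widen _ _ (_ : (size (c%:P * P)%R <= size P)%N)); last first.
  by rewrite mul_polyC size_scale_leq.
by rewrite /pmul mulr_sumr; apply: eq_bigr => i _; rewrite coefCM mulrA.
Qed.

Lemma pmulNl P s : pmul (- P) s = sscale (-1) (pmul P s).
Proof. by rewrite -pmulCMl polyCN polyC1 mulN1r. Qed.

Lemma pmulC (c : C) s : pmul c%:P s = sscale c s.
Proof.
apply: functional_extensionality => k.
by rewrite (pmul_widen _ _ (size_polyC_leq1 c)) big_ord1 coefC subr0.
Qed.

Lemma pmulMXl P s : pmul (P * 'X) s = pmul P (smulz s).
Proof.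
apply: functional_extensionality => k.
rewrite (pmul_widen _ _ (_ : (size (P * 'X)%R <= (size P).+1)%N)); last first.
  by apply: leq_trans (size_polyMleq _ _) _; rewrite size_polyX addn2.
rewrite big_ord_recl coefMX /= mul0r add0r.
by apply: eq_bigr => i _; rewrite coefMX /= /smulz /bump /=; congr (_ * s _); lia.
Qed.

Lemma pmulDr P s t : pmul P (sadd s t) = sadd (pmul P s) (pmul P t).
Proof.
apply: functional_extensionality => k; rewrite /sadd /pmul -big_split.
by apply: eq_bigr => i _; rewrite mulrDr.
Qed.

Lemma smulz_pmul P s : smulz (pmul P s) = pmul P (smulz s).
Proof.
apply: functional_extensionality => k.
by apply: eq_bigr => i _; rewrite /smulz; congr (_ * s _); lia.
Qed.

Lemma pmulA P Q s : pmul P (pmul Q s) = pmul (P * Q) s.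
Proof.
elim/poly_ind: P s => [|P c IH] s; first by rewrite mul0r !pmul0l.
by rewrite pmulDl pmulMXl pmulC smulz_pmul IH mulrDl mulrAC pmulDl pmulMXl pmulCMl.
Qed.

Lemma pser0 : pser 0 = szero.
Proof. by apply: functional_extensionality => -[n|n] //=; rewrite coef0. Qed.

Lemma pserD A B : sadd (pser A) (pser B) = pser (A + B).
Proof. by apply: functional_extensionality => -[n|n]; rewrite /sadd /= ?coefD ?addr0. Qed.

Lemma pserB A B : ssub (pser A) (pser B) = pser (A - B).
Proof. by apply: functional_extensionality => -[n|n]; rewrite /ssub /= ?coefB ?subr0. Qed.

Lemma pserCM (c : C) A : sscale c (pser A) = pser (c%:P * A).
Proof. by apply: functional_extensionality => -[n|n]; rewrite /sscale /= ?coefCM ?mulr0. Qed.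

Lemma smulz_pser P : smulz (pser P) = pser (P * 'X).
Proof.
apply: functional_extensionality => -[[|n]|n]; rewrite /smulz.
- by rewrite (_ : Posz 0 - 1 = Negz 0) //= coefMX.
- by rewrite (_ : Posz n.+1 - 1 = Posz n) /= ?coefMX //; lia.
- by rewrite (_ : Negz n - 1 = Negz n.+1) //; lia.
Qed.

Lemma pmul_pser P Q : pmul P (pser Q) = pser (P * Q).
Proof.
elim/poly_ind: P Q => [|P c IH] Q; first by rewrite mul0r pmul0l pser0.
by rewrite pmulDl pmulMXl pmulC smulz_pser IH pserCM pserD; congr pser; ring.
Qed.

Lemma sderiv0 : sderiv szero = szero.
Proof. by apply: functional_extensionality => k; rewrite /sderiv /szero mulr0. Qed.

Lemma sderivD s t : sderiv (sadd s t) = sadd (sderiv s) (sderiv t).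
Proof. by apply: functional_extensionality => k; rewrite /sderiv /sadd mulrDr. Qed.

Lemma sderivZ (c : C) s : sderiv (sscale c s) = sscale c (sderiv s).
Proof. by apply: functional_extensionality => k; rewrite /sderiv /sscale mulrCA. Qed.

Lemma sderiv_smulz s : sderiv (smulz s) = sadd (smulz (sderiv s)) s.
Proof.
apply: functional_extensionality => k; rewrite /sderiv /smulz /sadd.
by rewrite addrK subrK intrD mulrDl mul1r.
Qed.

Lemma sderiv_pser P : sderiv (pser P) = pser P^`().
Proof.
apply: functional_extensionality => -[n|[|n]]; rewrite /sderiv.
- by rewrite (_ : Posz n + 1 = Posz n.+1) /= ?coef_deriv ?mulr_natl //; lia.
- by rewrite (_ : Negz 0 + 1 = 0) //= mul0r.
- by rewrite (_ : Negz n.+1 + 1 = Negz n) /= ?mulr0 //; lia.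
Qed.

Lemma sderiv_pmul P s :
  sderiv (pmul P s) = sadd (pmul P^`() s) (pmul P (sderiv s)).
Proof.
elim/poly_ind: P s => [|P c IH] s.
  rewrite deriv0 !pmul0l sderiv0.
  by apply: functional_extensionality => k; rewrite /sadd /szero addr0.
rewrite derivMXaddC !pmulDl !pmulMXl !pmulC sderivD IH sderivZ sderiv_smulz pmulDr.
by apply: functional_extensionality => k; rewrite /sadd /sscale; ring.
Qed.

End SeriesAlgebra.

Section SemiClassicalElimination.
Variables (C : numClosedFieldType) (mu : nat -> C).
Implicit Types (P A B Z : {poly C}).

(* Every series occurring in the definitions of Θ_n and Ω_n has this form. *)
Definition fcomb A B Z : ser C :=
  sadd (sadd (pmul A (fser mu)) (pmul B (sderiv (fser mu)))) (pser Z).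

Lemma pmul_fcomb P A B Z : pmul P (fcomb A B Z) = fcomb (P * A) (P * B) (P * Z).
Proof. by rewrite /fcomb !pmulDr !pmulA pmul_pser. Qed.

Lemma fcombD A B Z A' B' Z' :
  sadd (fcomb A B Z) (fcomb A' B' Z') = fcomb (A + A') (B + B') (Z + Z').
Proof.
rewrite /fcomb !pmulDl -pserD.
by apply: functional_extensionality => k; rewrite /sadd; ring.
Qed.

Lemma fcombB A B Z A' B' Z' :
  ssub (fcomb A B Z) (fcomb A' B' Z') = fcomb (A - A') (B - B') (Z - Z').
Proof.
rewrite /fcomb !pmulDl !pmulNl -pserB.
by apply: functional_extensionality => k; rewrite /sadd /ssub /sscale; ring.
Qed.

Lemma fcombZ (c : C) A B Z :
  sscale c (fcomb A B Z) = fcomb (c%:P * A) (c%:P * B) (c%:P * Z).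
Proof.
rewrite /fcomb !pmulCMl -pserCM.
by apply: functional_extensionality => k; rewrite /sadd /sscale; ring.
Qed.

Lemma eps_fcomb P : eps mu P = fcomb P 0 (- p1 mu P).
Proof.
rewrite /eps /fcomb pmul0l.
by apply: functional_extensionality => -[n|n]; rewrite /ssub /sadd /szero /= ?coefN; ring.
Qed.

Lemma sderiv_fcomb A Z : sderiv (fcomb A 0 Z) = fcomb A^`() A Z^`().
Proof.
rewrite /fcomb pmul0l !sderivD sderiv_pmul sderiv0 sderiv_pser.
by apply: functional_extensionality => k; rewrite /sadd /szero; ring.
Qed.

Lemma fcomb_pser A B Z Z' : A = 0 -> B = 0 -> Z = Z' -> fcomb A B Z = pser Z'.
Proof.
move=> -> -> ->; rewrite /fcomb !pmul0l.
by apply: functional_extensionality => k; rewrite /sadd /szero; ring.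
Qed.

Variables (W V U : {poly C}).
Hypothesis semi_classical :
  pmul W (sderiv (fser mu)) = sadd (pmul (2%:R *: V) (fser mu)) (pser U).

Lemma fcomb_semi_classical A B B0 Z :
  B = W * B0 -> A + B0 * (V *+ 2) = 0 -> fcomb A B Z = pser (Z + B0 * U).
Proof.
move=> -> eA; rewrite /fcomb mulrC -pmulA semi_classical pmulDr pmulA pmul_pser scaler_nat.
have := congr1 (fun P => pmul P (fser mu)) eA; rewrite pmulDl pmul0l => eAf.
apply: functional_extensionality => k; have := congr1 (fun s => s k) eAf.
by rewrite -pserD /sadd /szero addrA => ->; rewrite add0r addrC.
Qed.

Lemma Theta_ser_closed (p : nat -> {poly C}) n :
  Theta_ser mu W V p n = pser (theta U V W (p n) (p1 mu (p n))).
Proof.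
rewrite /Theta_ser eps_fcomb sderiv_fcomb !pmul_fcomb fcombB pmul_fcomb fcombD.
rewrite (@fcomb_semi_classical _ _ (- (p n * p n))); first congr pser.
all: by rewrite ?scaler_nat /theta; ring.
Qed.

Lemma Omega_ser_closed (a : nat -> C) (p : nat -> {poly C}) n :
  Omega_ser mu W V a p n
  = pser ((a n)%:P * omega U V W (p n.-1) (p1 mu (p n.-1)) (p n) (p1 mu (p n))).
Proof.
rewrite /Omega_ser !eps_fcomb sderiv_fcomb !pmul_fcomb fcombB fcombD !pmul_fcomb.
rewrite fcombD fcombZ (@fcomb_semi_classical _ _ ((a n)%:P * - (p n.-1 * p n))).
  by congr pser; rewrite /omega; ring.
all: by ring.
Qed.

End SemiClassicalElimination.

Section Vanishing.
Variable C : numClosedFieldType.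
Implicit Types (P : {poly C}) (s t : ser C).

Definition vanishes_from s (m : int) := forall k, m <= k -> s k = 0.

Lemma vanishes_from_le s m m' : vanishes_from s m -> m <= m' -> vanishes_from s m'.
Proof. by move=> hs hm k hk; apply: hs; apply: le_trans hm hk. Qed.

Lemma vanishes_from_pmul P s m d :
  vanishes_from s m -> (size P <= d)%N -> vanishes_from (pmul P s) (m + d%:Z - 1).
Proof.
move=> hs hd k hk; apply: big1 => i _; rewrite hs ?mulr0 //.
by have := ltn_ord i; lia.
Qed.

Lemma vanishes_from_sderiv s m : vanishes_from s m -> vanishes_from (sderiv s) (m - 1).
Proof. by move=> hs k hk; rewrite /sderiv hs ?mulr0 //; lia. Qed.

Lemma vanishes_from_sadd s t m :
  vanishes_from s m -> vanishes_from t m -> vanishes_from (sadd s t) m.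
Proof. by move=> hs ht k hk; rewrite /sadd hs // ht // addr0. Qed.

Lemma vanishes_from_ssub s t m :
  vanishes_from s m -> vanishes_from t m -> vanishes_from (ssub s t) m.
Proof. by move=> hs ht k hk; rewrite /ssub hs // ht // subr0. Qed.

Lemma vanishes_from_sscale (c : C) s m :
  vanishes_from s m -> vanishes_from (sscale c s) m.
Proof. by move=> hs k hk; rewrite /sscale hs // mulr0. Qed.

Lemma size_pser_vanishing P (d : nat) : vanishes_from (pser P) d -> (size P <= d)%N.
Proof. by move=> h; apply/leq_sizeP => j hj; exact: (h (Posz j)). Qed.

Lemma ptrunc_pser_vanishing P (d N : nat) :
  vanishes_from (pser P) d -> (d <= N)%N -> ptrunc N (pser P) = P.
Proof.
move=> /size_pser_vanishing hP hN; apply/polyP => i; rewrite coef_poly.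
by case: ltnP => // hi; rewrite nth_default // (leq_trans hP (leq_trans hN hi)).
Qed.

End Vanishing.

Section Moments.
Variables (C : numClosedFieldType) (mu : nat -> C).
Implicit Types (P Q : {poly C}).

Lemma fser_nonneg k : 0 <= k -> fser mu k = 0.
Proof. by case: k. Qed.

Lemma coef_p1_high P j : ((size P).-1 <= j)%N -> (p1 mu P)`_j = 0.
Proof.
move=> hj; rewrite coef_poly; case: ifP => // _.
by apply: big1 => i _; rewrite fser_nonneg ?mulr0 //; have := ltn_ord i; lia.
Qed.

Lemma eps_vanishes_from0 P : vanishes_from (eps mu P) 0.
Proof.
case=> // j _; rewrite /eps /ssub /= coef_poly; case: ltnP => hj; first by rewrite subrr.
rewrite subr0; apply: big1 => i _; rewrite fser_nonneg ?mulr0 //.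
by have := ltn_ord i; lia.
Qed.

Definition Lxpow (m : nat) P : C := \sum_(i < size P) P`_i * mu (m + i)%N.

Lemma eps_Negz P m : eps mu P (Negz m) = Lxpow m P.
Proof.
rewrite /eps /ssub /= subr0; apply: eq_bigr => i _.
by rewrite (_ : Negz m - i%:Z = Negz (m + i)) //; lia.
Qed.

Lemma Lxpow_widen m P N : (size P <= N)%N ->
  Lxpow m P = \sum_(i < N) P`_i * mu (m + i)%N.
Proof. exact: (sum_coef_widen (fun i => mu (m + i)%N)). Qed.

Lemma LxpowD m P Q : Lxpow m (P + Q) = Lxpow m P + Lxpow m Q.
Proof.
rewrite (Lxpow_widen _ (leq_maxl (size P) (size Q))).
rewrite (Lxpow_widen _ (leq_maxr (size P) (size Q))).
rewrite (Lxpow_widen _ (size_polyD P Q)) -big_split.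
by apply: eq_bigr => i _; rewrite coefD mulrDl.
Qed.

Lemma LxpowCM m (c : C) P : Lxpow m (c%:P * P) = c * Lxpow m P.
Proof.
rewrite (Lxpow_widen _ (_ : (size (c%:P * P)%R <= size P)%N)); last first.
  by rewrite mul_polyC size_scale_leq.
by rewrite mulr_sumr; apply: eq_bigr => i _; rewrite coefCM mulrA.
Qed.

Lemma LxpowXM m P : Lxpow m ('X * P) = Lxpow m.+1 P.
Proof.
rewrite (Lxpow_widen _ (_ : (size ('X * P)%R <= (size P).+1)%N)); last first.
  by rewrite mulrC; apply: leq_trans (size_polyMleq _ _) _; rewrite size_polyX addn2.
rewrite big_ord_recl coefXM /= mul0r add0r.
by apply: eq_bigr => i _; rewrite coefXM /= addnS.
Qed.

End Moments.

Section OrthonormalSystem.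
Variables (C : numClosedFieldType) (mu : nat -> C) (p : nat -> {poly C}) (a b : nat -> C).
Hypothesis size_p : forall n, size (p n) = n.+1.
Hypothesis orthonormal_p : forall n m, Lfun mu (p n * p m) = (n == m)%:R.
Hypothesis three_term_p : forall n, a n.+1 *: p n.+1 =
  ('X - (b n)%:P) * p n - (if n is 0 then 0 else a n *: p n.-1).

Local Notation q n := (p1 mu (p n)).

Lemma size_deriv_p n : (size (p n)^`() <= n)%N.
Proof.
have pn0 : p n != 0 by rewrite -size_poly_eq0 size_p.
by have := lt_size_deriv pn0; rewrite size_p.
Qed.

Lemma three_term0 : (a 1)%:P * p 1 = ('X - (b 0)%:P) * p 0.
Proof. by rewrite mul_polyC three_term_p subr0. Qed.

Lemma three_term k :
  (a k.+2)%:P * p k.+2 = ('X - (b k.+1)%:P) * p k.+1 - (a k.+1)%:P * p k.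
Proof. by rewrite !mul_polyC three_term_p. Qed.

Lemma Lxpow_orthogonal m n : (m < n)%N -> Lxpow mu m (p n) = 0.
Proof.
elim: m n => [|m IH] n hn.
  have /size_poly1P [c c0 hc] : size (p 0) == 1%N by rewrite size_p.
  have := orthonormal_p n 0; rewrite hc mulrC -[Lfun _ _]/(Lxpow mu 0 _) LxpowCM.
  by rewrite (gtn_eqF hn) => /eqP; rewrite mulf_eq0 (negbTE c0) => /eqP.
case: n hn => [|[|k]] // hn; rewrite -LxpowXM.
have -> : 'X * p k.+2
  = (a k.+3)%:P * p k.+3 + (b k.+2)%:P * p k.+2 + (a k.+2)%:P * p k.+1.
  by rewrite three_term; ring.
by rewrite !LxpowD !LxpowCM !IH ?mulr0 ?addr0 //; lia.
Qed.

Lemma eps_p_vanishes n : vanishes_from (eps mu (p n)) (- n%:Z).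
Proof.
case=> [j|j] hj; first exact: eps_vanishes_from0.
by rewrite eps_Negz Lxpow_orthogonal //; lia.
Qed.

Lemma p1_three_term k :
  (a k.+2)%:P * q k.+2 = ('X - (b k.+1)%:P) * q k.+1 - (a k.+1)%:P * q k.
Proof.
(* The series a_(k+2) ε_(k+2) - (z - b_(k+1)) ε_(k+1) + a_(k+1) ε_k is minus this
   polynomial and has no nonnegative powers. *)
apply/eqP; rewrite -subr_eq0 -oppr_eq0 -size_poly_leq0; apply: size_pser_vanishing.
have -> : pser (- ((a k.+2)%:P * q k.+2 - (('X - (b k.+1)%:P) * q k.+1 - (a k.+1)%:P * q k)))
  = sadd (ssub (pmul (a k.+2)%:P (eps mu (p k.+2)))
               (pmul ('X - (b k.+1)%:P) (eps mu (p k.+1))))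
         (pmul (a k.+1)%:P (eps mu (p k))).
  rewrite !eps_fcomb !pmul_fcomb fcombB fcombD; symmetry.
  by apply: fcomb_pser; rewrite ?three_term; ring.
apply: vanishes_from_sadd; first apply: vanishes_from_ssub.
- by apply: vanishes_from_le (vanishes_from_pmul (@eps_p_vanishes _) (size_polyC_leq1 _)) _; lia.
- have := vanishes_from_pmul (@eps_p_vanishes k.+1) (eq_leq (size_XsubC (b k.+1))).
  by move/vanishes_from_le; apply; lia.
- by apply: vanishes_from_le (vanishes_from_pmul (@eps_p_vanishes _) (size_polyC_leq1 _)) _; lia.
Qed.

Lemma p1_p0 : q 0 = 0.
Proof. by apply/polyP => j; rewrite coef0 coef_p1_high // size_p. Qed.

Lemma p1_p1 : q 1 = ((p 1)`_1 * mu 0)%:P.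
Proof.
apply/polyP => -[|j]; rewrite coefC /=; last by rewrite coef_p1_high ?size_p.
rewrite coef_poly size_p /= /pmul size_p big_ord_recl big_ord1 /=.
by rewrite mulr0 add0r.
Qed.

Lemma wronskian_p k : (a k.+1)%:P * (q k.+1 * p k - q k * p k.+1) = 1.
Proof.
elim: k => [|k IH]; last first.
  transitivity ((a k.+2)%:P * q k.+2 * p k.+1 - q k.+1 * ((a k.+2)%:P * p k.+2)).
    by ring.
  by rewrite three_term p1_three_term -IH; ring.
have /size_poly1P [c c0 hc] : size (p 0) == 1%N by rewrite size_p.
have normalized : c * (c * mu 0) = 1.
  have := orthonormal_p 0 0; rewrite hc -[Lfun _ _]/(Lxpow mu 0 _) LxpowCM.
  by rewrite /Lxpow size_polyC c0 big_ord1 coefC.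
have lead : a 1 * (p 1)`_1 = c.
  have h : ((a 1)%:P * p 1)`_1 = (('X - (b 0)%:P) * p 0)`_1 by rewrite three_term0.
  by rewrite coefCM hc coefMC coefB coefX coefC /= subr0 mul1r in h.
rewrite p1_p0 p1_p1 hc mul0r subr0 -!polyCM -polyC1; congr polyC.
transitivity (a 1 * (p 1)`_1 * (c * mu 0)); first by ring.
by rewrite lead normalized.
Qed.

Variables (W V U : {poly C}).

Lemma Theta_ser_vanishes n : vanishes_from (Theta_ser mu W V p n) (size W + size V)%N.
Proof.
have hE := @eps_p_vanishes n; have hd := size_deriv_p n.
have hp := eq_leq (size_p n).
apply: vanishes_from_sadd.
  apply: vanishes_from_le (vanishes_from_pmul (m := -1) _ (leqnn (size W))) _; last by lia.
  apply: vanishes_from_ssub.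
    by apply: vanishes_from_le (vanishes_from_pmul hE hd) _; lia.
  by apply: vanishes_from_le (vanishes_from_pmul (vanishes_from_sderiv hE) hp) _; lia.
apply: vanishes_from_le (vanishes_from_pmul (m := 0) _ (size_scale_leq 2%:R V)) _; last by lia.
by apply: vanishes_from_le (vanishes_from_pmul hE hp) _; lia.
Qed.

Lemma Omega_ser_vanishes n :
  vanishes_from (Omega_ser mu W V a p n.+1) (size W + size V)%N.
Proof.
have hE0 := @eps_p_vanishes n; have hE1 := @eps_p_vanishes n.+1.
have hd := size_deriv_p n.+1.
have hp0 := eq_leq (size_p n); have hp1 := eq_leq (size_p n.+1).
apply/vanishes_from_sscale/vanishes_from_sadd.
  apply: vanishes_from_le (vanishes_from_pmul (m := 0) _ (leqnn (size W))) _; last by lia.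
  apply: vanishes_from_ssub.
    by apply: vanishes_from_le (vanishes_from_pmul hE0 hd) _; lia.
  by apply: vanishes_from_le (vanishes_from_pmul (vanishes_from_sderiv hE1) hp0) _; lia.
apply: vanishes_from_le (vanishes_from_pmul (m := 1) _ (leqnn (size V))) _; last by lia.
apply: vanishes_from_sadd.
  by apply: vanishes_from_le (vanishes_from_pmul hE0 hp1) _; lia.
by apply: vanishes_from_le (vanishes_from_pmul hE1 hp0) _; lia.
Qed.

Hypothesis semi_classical :
  pmul W (sderiv (fser mu)) = sadd (pmul (2%:R *: V) (fser mu)) (pser U).

Lemma ThetaP_closed n : ThetaP mu W V p n = theta U V W (p n) (q n).
Proof.
rewrite /ThetaP (Theta_ser_closed semi_classical).
apply: (ptrunc_pser_vanishing (d := size W + size V)); last by lia.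
by rewrite -(Theta_ser_closed semi_classical); exact: Theta_ser_vanishes.
Qed.

Lemma OmegaP_closed n :
  OmegaP mu W V a p n.+1 = (a n.+1)%:P * omega U V W (p n) (q n) (p n.+1) (q n.+1).
Proof.
rewrite /OmegaP (Omega_ser_closed semi_classical).
apply: (ptrunc_pser_vanishing (d := size W + size V)); last by lia.
by rewrite -(Omega_ser_closed semi_classical); exact: Omega_ser_vanishes.
Qed.

Lemma OmegaP_rec k : OmegaP mu W V a p k.+2
  = ('X - (b k.+1)%:P) * ThetaP mu W V p k.+1 - OmegaP mu W V a p k.+1.
Proof.
rewrite !OmegaP_closed ThetaP_closed.
exact: omega_rec (three_term k) (p1_three_term k) (wronskian_p k).
Qed.

Lemma OmegaP_diff k :
  ('X - (b k.+1)%:P) * (OmegaP mu W V a p k.+2 - OmegaP mu W V a p k.+1)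
  = W + (a k.+2)%:P ^+ 2 * ThetaP mu W V p k.+2 - (a k.+1)%:P ^+ 2 * ThetaP mu W V p k.
Proof.
rewrite !OmegaP_closed !ThetaP_closed.
exact: omega_diff (three_term k) (p1_three_term k) (wronskian_p k).
Qed.

(* The induction starts at n = 0 by extending the system with p_(-1) = 0,
   q_(-1) = - a_1 q_1 and a_0 = 1: the recurrences and the Wronskian still hold,
   and then Ω_0 = V and Θ_(-1) = 0. *)
Lemma OmegaP_sq k :
  OmegaP mu W V a p k.+1 ^+ 2
    - (a k.+1)%:P ^+ 2 * (ThetaP mu W V p k.+1 * ThetaP mu W V p k)
  = V ^+ 2 + W * \sum_(i < k.+1) ThetaP mu W V p i.
Proof.
elim: k => [|k IH]; last first.
  by rewrite big_ord_recr /=; exact: omega_sq_step (OmegaP_rec k) (OmegaP_diff k) IH.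
rewrite big_ord1 OmegaP_closed !ThetaP_closed p1_p0.
set Q := - ((a 1)%:P * q 1).
have dp0 : (p 0)^`() = 0 by apply/eqP; rewrite -size_poly_leq0 size_deriv_p.
have recP : (a 1)%:P * p 1 = ('X - (b 0)%:P) * p 0 - 1%:P * 0.
  by rewrite three_term0 mulr0 subr0.
have recQ : (a 1)%:P * q 1 = ('X - (b 0)%:P) * 0 - 1%:P * Q by rewrite polyC1 /Q; ring.
have wr : 1%:P * (0 * 0 - Q * p 0) = 1.
  by rewrite -[RHS](wronskian_p 0) p1_p0 polyC1 /Q; ring.
have Omega0 : 1%:P * omega U V W 0 Q (p 0) 0 = V.
  by rewrite -[RHS]mulr1 -[in RHS]wr /omega dp0 deriv0; ring.
have Theta_m1 : theta U V W 0 Q = 0 by rewrite /theta deriv0; ring.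
have base : (1%:P * omega U V W 0 Q (p 0) 0) ^+ 2
    - 1%:P ^+ 2 * (theta U V W (p 0) 0 * theta U V W 0 Q) = V ^+ 2 + W * 0.
  by rewrite Omega0 Theta_m1; ring.
have := omega_sq_step (omega_rec U V W recP recQ wr) (omega_diff U V W recP recQ wr) base.
by rewrite add0r.
Qed.

End OrthonormalSystem.

Unset Implicit Arguments.
Set Strict Implicit.

Theorem mainTheorem3 (C : numClosedFieldType) (mu : nat -> C)
    (p : nat -> {poly C}) (a b : nat -> C) (W V U : {poly C}) :
  (forall n : nat, \det (\matrix_(i < n.+1, j < n.+1) mu (i + j)%N) != 0) ->
  (forall n : nat, size (p n) = n.+1) ->
  (forall n m : nat, Lfun mu (p n * p m) = (n == m)%:R) ->
  (forall n : nat, (0 < n)%N -> a n = lead_coef (p n.-1) / lead_coef (p n)) ->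
  (forall n : nat, a n.+1 *: p n.+1 =
       ('X - (b n)%:P) * p n - (if n is 0 then 0 else a n *: p n.-1)) ->
  W != 0 ->
  pmul W (sderiv (fser mu)) = sadd (pmul (2%:R *: V) (fser mu)) (pser U) ->
  forall n : nat, (0 < n)%N ->
  [/\ OmegaP mu W V a p n.+1 = ('X - (b n)%:P) * ThetaP mu W V p n - OmegaP mu W V a p n,
      ('X - (b n)%:P) * (OmegaP mu W V a p n.+1 - OmegaP mu W V a p n)
        = W + a n.+1 ^+ 2 *: ThetaP mu W V p n.+1 - a n ^+ 2 *: ThetaP mu W V p n.-1
    & OmegaP mu W V a p n ^+ 2 - a n ^+ 2 *: (ThetaP mu W V p n * ThetaP mu W V p n.-1)
        = V ^+ 2 + W * \sum_(i < n) ThetaP mu W V p i].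
Proof.
move=> _ size_p orthonormal_p _ three_term_p _ semi_classical [//|k] _.
rewrite -!mul_polyC !polyC_exp.
split.
- exact: (OmegaP_rec size_p orthonormal_p three_term_p semi_classical k).
- exact: (OmegaP_diff size_p orthonormal_p three_term_p semi_classical k).
- exact: (OmegaP_sq size_p orthonormal_p three_term_p semi_classical k).
Qed.
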